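(* Let $G$ be a connected graph on $n\ge2$ vertices, $\alpha\in\mathbb{R}$, with vertices labeled so that $({}^\alpha\mathbb{M})_1\ge({}^\alpha\mathbb{M})_2\ge\cdots\ge({}^\alpha\mathbb{M})_n$. Let $N=\max_{1\le i,j\le n} d_{ij}\mathbb{D}_j^\alpha/\mathbb{D}_i^\alpha$. Then for $1\le i\le n$, \[\rho(\mathbb{D}(G))\le \frac{({}^\alpha\mathbb{M})_i-N+\sqrt{(({}^\alpha\mathbb{M})_i+N)^2+4N\sum_{k=1}^{i-1}\big(({}^\alpha\mathbb{M})_k-({}^\alpha\mathbb{M})_i\big)}}{2}.\] Equality holds if and only if $({}^\alpha\mathbb{M})_1=\cdots=({}^\alpha\mathbb{M})_n$, or for some $2\le t\le i$: (i) $d_{kl}\mathbb{D}_l^\alpha/\mathbb{D}_k^\alpha=N$ for all $1\le k\le n$, $1\le l\le t-1$, $k\ne l$; (ii) $({}^\alpha\mathbb{M})_t=\cdots=({}^\alpha\mathbb{M})_n$.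
   Context: $\mathbb{D}(G)=(d_{ij})$ is the distance matrix of $G$, $d_{ij}$ the distance between $v_i$ and $v_j$. The transmission of $v_i$ is $\mathbb{D}_i=\sum_{j}d_{ij}$. The generalized average transmission is $({}^\alpha\mathbb{M})_i=\frac{\sum_{j=1}^n d_{ij}\mathbb{D}_j^\alpha}{\mathbb{D}_i^\alpha}$. $\rho$ is the spectral radius. An empty sum equals $0$. *)

From Stdlib Require Import Reals Lra Lia.
Open Scope R_scope.

(* Vertices of a graph on n vertices are 0, ..., n-1.
   A simple graph is given by a boolean adjacency relation. *)
Definition simple_graph (n : nat) (adj : nat -> nat -> bool) : Prop :=
  (forall i j, (i < n)%nat -> (j < n)%nat -> adj i j = adj j i) /\
  (forall i, (i < n)%nat -> adj i i = false).

Inductive walk (n : nat) (adj : nat -> nat -> bool) : nat -> nat -> nat -> Prop :=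
| walk_nil : forall i, (i < n)%nat -> walk n adj i i 0
| walk_cons : forall i m j k, (i < n)%nat -> (m < n)%nat -> adj i m = true ->
    walk n adj m j k -> walk n adj i j (S k).

Definition connected (n : nat) (adj : nat -> nat -> bool) : Prop :=
  forall i j, (i < n)%nat -> (j < n)%nat -> exists k, walk n adj i j k.

Definition is_distance_matrix (n : nat) (adj : nat -> nat -> bool)
  (d : nat -> nat -> nat) : Prop :=
  forall i j, (i < n)%nat -> (j < n)%nat ->
    walk n adj i j (d i j) /\ (forall k, walk n adj i j k -> (d i j <= k)%nat).

Fixpoint rsum (f : nat -> R) (m : nat) : R :=
  match m with
  | O => 0
  | S m' => rsum f m' + f m'
  end.

Fixpoint rmax (f : nat -> R) (m : nat) : R :=
  match m with
  | O => 0
  | S m' => Rmax (rmax f m') (f m')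
  end.

Definition transmission (n : nat) (d : nat -> nat -> nat) (i : nat) : R :=
  rsum (fun j => INR (d i j)) n.

Definition gen_avg_trans (n : nat) (d : nat -> nat -> nat) (alpha : R) (i : nat) : R :=
  rsum (fun j => INR (d i j) * Rpower (transmission n d j) alpha) n
    / Rpower (transmission n d i) alpha.

Definition ratio (n : nat) (d : nat -> nat -> nat) (alpha : R) (i j : nat) : R :=
  INR (d i j) * Rpower (transmission n d j) alpha / Rpower (transmission n d i) alpha.

(* N = max_{i,j} d_ij D_j^alpha / D_i^alpha  (all ratios are >= 0 and the
   diagonal ones are 0, so starting the max at 0 is harmless). *)
Definition Nmax (n : nat) (d : nat -> nat -> nat) (alpha : R) : R :=
  rmax (fun i => rmax (fun j => ratio n d alpha i j) n) n.

(* a + i b is a (complex) eigenvalue of the real n x n matrix A: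
   there is a nonzero complex vector x + i y with A (x + i y) = (a + i b)(x + i y). *)
Definition is_eigenvalue (n : nat) (A : nat -> nat -> R) (a b : R) : Prop :=
  exists x y : nat -> R,
    (exists i, (i < n)%nat /\ (x i <> 0 \/ y i <> 0)) /\
    (forall i, (i < n)%nat ->
       rsum (fun j => A i j * x j) n = a * x i - b * y i /\
       rsum (fun j => A i j * y j) n = b * x i + a * y i).

Definition is_spectral_radius (n : nat) (A : nat -> nat -> R) (r : R) : Prop :=
  (exists a b, is_eigenvalue n A a b /\ r = sqrt (a ^ 2 + b ^ 2)) /\
  (forall a b, is_eigenvalue n A a b -> sqrt (a ^ 2 + b ^ 2) <= r).

Definition dist_matrix_R (d : nat -> nat -> nat) : nat -> nat -> R :=
  fun i j => INR (d i j).

From Stdlib Require Import Reals Lra Lia Psatz Classical ConstructiveEpsilon.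
Open Scope R_scope.

(* Write A for the distance matrix, P k = D_k^alpha, M k = (A P)_k / P k and
   N for the largest weighted entry A k l P l / P k.  For an index i let b be
   the claimed bound, the larger root of (b - M i)(b + N) = N S with
   S = sum_{k < i} (M k - M i).  Tilting P up on its first i coordinates by
   (M k - M i)/(b + N) gives a positive test vector v with A v <= b v
   coordinatewise; the defect b v - A v is a sum of nonnegative slack terms.
   Pairing with the positive Perron vector p of A (eigenvalue rho) gives
   (b - rho) <p, v> = <p, b v - A v> >= 0, so rho <= b, with equality exactly
   when every slack term vanishes, which unfolds to the stated conditions. *)

Lemma rsum_ext (f g : nat -> R) m :
  (forall k, (k < m)%nat -> f k = g k) -> rsum f m = rsum g m.
Proof.
  induction m as [|m IH]; intros H; simpl; auto.
  rewrite IH by (intros; apply H; lia). rewrite H by lia. reflexivity.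
Qed.

Lemma rsum_plus (f g : nat -> R) m :
  rsum (fun k => f k + g k) m = rsum f m + rsum g m.
Proof. induction m; simpl; [lra | rewrite IHm; lra]. Qed.

Lemma rsum_minus (f g : nat -> R) m :
  rsum (fun k => f k - g k) m = rsum f m - rsum g m.
Proof. induction m; simpl; [lra | rewrite IHm; lra]. Qed.

Lemma rsum_scal (c : R) (f : nat -> R) m :
  rsum (fun k => c * f k) m = c * rsum f m.
Proof. induction m; simpl; [lra | rewrite IHm; lra]. Qed.

Lemma rsum_zero m : rsum (fun _ => 0) m = 0.
Proof. induction m; simpl; [lra | rewrite IHm; lra]. Qed.

Lemma rsum_le (f g : nat -> R) m :
  (forall k, (k < m)%nat -> f k <= g k) -> rsum f m <= rsum g m.
Proof.
  induction m as [|m IH]; intros H; simpl; [lra |].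
  assert (rsum f m <= rsum g m) by (apply IH; intros; apply H; lia).
  assert (f m <= g m) by (apply H; lia). lra.
Qed.

Lemma rsum_nonneg (f : nat -> R) m :
  (forall k, (k < m)%nat -> 0 <= f k) -> 0 <= rsum f m.
Proof. intros H. rewrite <- (rsum_zero m). apply rsum_le. auto. Qed.

Lemma rsum_split (f : nat -> R) m k : (k < m)%nat ->
  rsum f m = rsum (fun l => if Nat.eqb l k then 0 else f l) m + f k.
Proof.
  induction m as [|m IH]; intros Hk; [lia |]. simpl.
  destruct (Nat.eq_dec k m) as [->|Hne].
  - rewrite Nat.eqb_refl.
    rewrite (rsum_ext (fun l => if Nat.eqb l m then 0 else f l) f m); [lra |].
    intros l Hl. destruct (Nat.eqb_spec l m); [lia | auto].
  - rewrite IH by lia. destruct (Nat.eqb_spec m k); [lia | lra].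
Qed.

Lemma rsum_ge_term (f : nat -> R) m k :
  (forall l, (l < m)%nat -> 0 <= f l) -> (k < m)%nat -> f k <= rsum f m.
Proof.
  intros H Hk. rewrite (rsum_split f m k Hk).
  assert (0 <= rsum (fun l => if Nat.eqb l k then 0 else f l) m).
  { apply rsum_nonneg. intros l Hl. destruct (Nat.eqb l k); [lra | auto]. }
  lra.
Qed.

Lemma rsum_eq0 (f : nat -> R) m :
  (forall l, (l < m)%nat -> 0 <= f l) -> rsum f m = 0 ->
  forall l, (l < m)%nat -> f l = 0.
Proof.
  intros H Hs l Hl. pose proof (rsum_ge_term f m l H Hl). pose proof (H l Hl). lra.
Qed.

Lemma rsum_pos (f : nat -> R) m k :
  (forall l, (l < m)%nat -> 0 <= f l) -> (k < m)%nat -> 0 < f k -> 0 < rsum f m.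
Proof. intros H Hk Hp. pose proof (rsum_ge_term f m k H Hk). lra. Qed.

Lemma rsum_swap (F : nat -> nat -> R) m1 m2 :
  rsum (fun k => rsum (fun l => F k l) m2) m1 =
  rsum (fun l => rsum (fun k => F k l) m1) m2.
Proof.
  induction m1; simpl.
  - rewrite rsum_zero. reflexivity.
  - rewrite IHm1, <- rsum_plus. reflexivity.
Qed.

Lemma rsum_trunc (f : nat -> R) m j : (j <= m)%nat ->
  rsum (fun l => if Nat.ltb l j then f l else 0) m = rsum f j.
Proof.
  induction m as [|m IH]; intros Hj.
  - replace j with 0%nat by lia. reflexivity.
  - destruct (Nat.eq_dec j (S m)) as [->|Hne].
    + apply rsum_ext. intros k Hk. destruct (Nat.ltb_spec k (S m)); [auto | lia].
    + simpl. rewrite IH by lia. destruct (Nat.ltb_spec m j); [lia | lra].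
Qed.

Lemma rsum_tail_zero (f : nat -> R) t i : (t <= i)%nat ->
  (forall k, (t <= k)%nat -> (k < i)%nat -> f k = 0) -> rsum f i = rsum f t.
Proof.
  induction i as [|i IH]; intros Ht H.
  - replace t with 0%nat by lia. reflexivity.
  - destruct (Nat.eq_dec t (S i)) as [->|Hne]; [reflexivity |].
    simpl. rewrite IH; [rewrite H by lia; lra | lia | intros; apply H; lia].
Qed.

Lemma rmax_ge (f : nat -> R) m k : (k < m)%nat -> f k <= rmax f m.
Proof.
  induction m as [|m IH]; intros Hk; [lia |]. simpl.
  destruct (Nat.eq_dec k m) as [->|Hne].
  - apply Rmax_r.
  - eapply Rle_trans; [apply IH; lia | apply Rmax_l].
Qed.

Definition mulv (m : nat) (A : nat -> nat -> R) (x : nat -> R) (k : nat) : R :=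
  rsum (fun l => A k l * x l) m.

Definition dot (m : nat) (x y : nat -> R) : R := rsum (fun k => x k * y k) m.

Definition qform (m : nat) (A : nat -> nat -> R) (x : nat -> R) : R :=
  dot m x (mulv m A x).

Definition symm (m : nat) (A : nat -> nat -> R) : Prop :=
  forall k l, (k < m)%nat -> (l < m)%nat -> A k l = A l k.

Lemma dot_mulv_sym m A x y : symm m A -> dot m x (mulv m A y) = dot m y (mulv m A x).
Proof.
  intros HS. unfold dot, mulv.
  rewrite (rsum_ext (fun k => x k * rsum (fun l => A k l * y l) m)
      (fun k => rsum (fun l => x k * A k l * y l) m)).
  2:{ intros k Hk. rewrite <- rsum_scal. apply rsum_ext. intros; ring. }
  rewrite rsum_swap. apply rsum_ext. intros l Hl.
  rewrite <- rsum_scal. apply rsum_ext. intros k Hk. rewrite (HS k l) by auto. ring.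
Qed.

Lemma qform_double m A x :
  qform m A x = rsum (fun k => rsum (fun l => x k * A k l * x l) m) m.
Proof.
  unfold qform, dot, mulv. apply rsum_ext. intros k Hk. rewrite <- rsum_scal.
  apply rsum_ext. intros; ring.
Qed.

Lemma qform_ext m A x y :
  (forall k, (k < m)%nat -> x k = y k) -> qform m A x = qform m A y.
Proof.
  intros H. rewrite !qform_double. apply rsum_ext. intros k Hk.
  apply rsum_ext. intros l Hl. rewrite !H by auto. reflexivity.
Qed.

Lemma qform_zero m A x : (forall k, (k < m)%nat -> x k = 0) -> qform m A x = 0.
Proof.
  intros H. rewrite (qform_ext m A x (fun _ => 0) H), qform_double.
  rewrite (rsum_ext _ (fun _ => 0)); [apply rsum_zero |].
  intros k Hk. rewrite (rsum_ext _ (fun _ => 0)); [apply rsum_zero | intros; ring].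
Qed.

Lemma qform_scal m A c y : qform m A (fun k => c * y k) = c * c * qform m A y.
Proof.
  rewrite !qform_double, <- rsum_scal. apply rsum_ext. intros k Hk.
  rewrite <- rsum_scal. apply rsum_ext. intros; ring.
Qed.

Lemma dot_self_scal m c y : dot m (fun k => c * y k) (fun k => c * y k) = c * c * dot m y y.
Proof. unfold dot. rewrite <- rsum_scal. apply rsum_ext. intros; ring. Qed.

Lemma dot_self_nonneg m x : 0 <= dot m x x.
Proof. apply rsum_nonneg. intros. nra. Qed.

Lemma dot_self_zero m x : dot m x x = 0 -> forall k, (k < m)%nat -> x k = 0.
Proof.
  intros H k Hk.
  assert (x k * x k = 0) by (apply (rsum_eq0 (fun k => x k * x k) m); auto; intros; nra).
  nra.
Qed.

Lemma qform_line m A x y t : symm m A ->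
  qform m A (fun k => x k + t * y k) =
  qform m A x + 2 * t * dot m y (mulv m A x) + t * t * qform m A y.
Proof.
  intros HS. unfold qform.
  assert (Hlin : forall k, mulv m A (fun l => x l + t * y l) k = mulv m A x k + t * mulv m A y k).
  { intros k. unfold mulv. rewrite <- rsum_scal, <- rsum_plus. apply rsum_ext. intros; ring. }
  unfold dot at 1. rewrite (rsum_ext _ (fun k => (x k * mulv m A x k + t * (x k * mulv m A y k))
     + (t * (y k * mulv m A x k) + t * t * (y k * mulv m A y k)))).
  2:{ intros k Hk. rewrite Hlin. ring. }
  rewrite !rsum_plus, !rsum_scal.
  change (rsum (fun k => x k * mulv m A y k) m) with (dot m x (mulv m A y)).
  rewrite (dot_mulv_sym m A x y HS). unfold dot. ring.
Qed.

Lemma psd_isotropic_kernel m B x : symm m B -> (forall y, 0 <= qform m B y) ->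
  qform m B x = 0 -> forall k, (k < m)%nat -> mulv m B x k = 0.
Proof.
  intros HS HP HQ.
  set (y := mulv m B x). set (g := dot m y y). set (q := qform m B y).
  assert (Hg0 : 0 <= g) by apply dot_self_nonneg.
  assert (Hq0 : 0 <= q) by apply HP.
  assert (Hg : g = 0).
  { set (t := - g / (q + 1)).
    pose proof (HP (fun k => x k + t * y k)) as H1.
    rewrite qform_line, HQ in H1 by auto. fold y q g in H1.
    assert (Ht : t * (q + 1) = - g) by (unfold t; field; lra).
    assert (Hval : 0 + 2 * t * g + t * t * q = - (t * t * (q + 2))).
    { replace g with (- (t * (q + 1))) by lra. ring. }
    assert (t * t = 0) by nra.
    assert (t = 0) by (destruct (Rmult_integral t t); auto). nra. }
  intros k Hk. apply (dot_self_zero m y Hg k Hk).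
Qed.

Lemma cauchy_schwarz m a b : (dot m a b) ^ 2 <= dot m a a * dot m b b.
Proof.
  induction m as [|m IH]; unfold dot in *; simpl; [lra |].
  set (C := rsum (fun k => a k * b k) m) in *.
  set (A := rsum (fun k => a k * a k) m) in *.
  set (B := rsum (fun k => b k * b k) m) in *.
  assert (0 <= A) by (apply rsum_nonneg; intros; nra).
  assert (0 <= B) by (apply rsum_nonneg; intros; nra).
  set (x := a m) in *. set (y := b m) in *.
  assert (H2 : (2 * x * y * C) ^ 2 <= (x * x * B + y * y * A) ^ 2).
  { assert (4 * (x * y) ^ 2 * C ^ 2 <= 4 * (x * y) ^ 2 * (A * B))
      by (apply Rmult_le_compat_l; nra).
    assert (0 <= (x * x * B - y * y * A) ^ 2) by apply pow2_ge_0.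
    nra. }
  assert (2 * x * y * C <= x * x * B + y * y * A).
  { destruct (Rle_dec (2 * x * y * C) 0); [nra |].
    apply Rsqr_incr_0_var; unfold Rsqr; nra. }
  nra.
Qed.

Lemma qform_last m B x : symm (S m) B ->
  qform (S m) B x =
  qform m B x + 2 * x m * rsum (fun l => B m l * x l) m + B m m * x m * x m.
Proof.
  intros HS. unfold qform, dot, mulv. simpl.
  rewrite (rsum_ext (fun k => x k * (rsum (fun l => B k l * x l) m + B k m * x m))
     (fun k => x k * rsum (fun l => B k l * x l) m + x m * (B m k * x k))).
  2:{ intros k Hk. rewrite (HS k m) by lia. ring. }
  rewrite rsum_plus, rsum_scal. ring.
Qed.

Definition schur (m : nat) (B : nat -> nat -> R) (k l : nat) : R :=
  B k l - B m k * B m l / B m m.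

Lemma symm_schur m B : symm (S m) B -> symm m (schur m B).
Proof. intros HS k l Hk Hl. unfold schur. rewrite (HS k l) by lia. unfold Rdiv. ring. Qed.

Lemma qform_schur m B x : symm (S m) B -> B m m <> 0 ->
  let w := rsum (fun l => B m l * x l) m in
  qform (S m) B x = qform m (schur m B) x + B m m * (x m + w / B m m) ^ 2.
Proof.
  intros HS Hb w.
  assert (Hs : qform m (schur m B) x = qform m B x - w ^ 2 / B m m).
  { unfold qform, dot, mulv, schur.
    rewrite (rsum_ext _ (fun k => x k * rsum (fun l => B k l * x l) m
                                   - (w / B m m) * (B m k * x k))).
    2:{ intros k Hk.
        rewrite (rsum_ext _ (fun l => B k l * x l - (B m k / B m m) * (B m l * x l)))
          by (intros; field; auto).
        rewrite rsum_minus, rsum_scal. fold w. field; auto. }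
    rewrite rsum_minus, rsum_scal. fold w. field; auto. }
  rewrite qform_last, Hs by auto. fold w. field; auto.
Qed.

(* The real-arithmetic core of the induction step below: a coercive bound on
   the Schur complement and a positive pivot give a coercive bound on B. *)
Lemma coercive_step c b K : 0 < c -> 0 < b -> 0 <= K ->
  exists c', 0 < c' /\ forall X q y p, 0 <= X -> c * X <= q -> p ^ 2 <= K * X ->
    c' * (X + y * y) <= q + b * (y + p) ^ 2.
Proof.
  intros Hc Hb HK.
  set (c' := Rmin (c / (1 + 2 * K)) (b / 2)).
  exists c'. split.
  { apply Rmin_glb_lt; [apply Rdiv_lt_0_compat |]; lra. }
  intros X q y p HX Hq Hp.
  assert (Hc1 : c' * (1 + 2 * K) <= c).
  { assert (Hm : c' <= c / (1 + 2 * K)) by apply Rmin_l.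
    apply (Rmult_le_compat_r (1 + 2 * K)) in Hm; [| lra].
    replace (c / (1 + 2 * K) * (1 + 2 * K)) with c in Hm by (field; lra). lra. }
  assert (Hc2 : c' <= b / 2) by apply Rmin_r.
  assert (Hy : y * y <= 2 * (y + p) ^ 2 + 2 * K * X).
  { assert (0 <= (y + 2 * p) ^ 2) by apply pow2_ge_0. nra. }
  assert (0 <= (y + p) ^ 2) by apply pow2_ge_0.
  assert (Hc'0 : 0 <= c') by (apply Rmin_glb; [apply Rlt_le, Rdiv_lt_0_compat |]; lra).
  assert (c' * (y * y) <= c' * (2 * (y + p) ^ 2 + 2 * K * X)) by (apply Rmult_le_compat_l; auto).
  assert (c' * (1 + 2 * K) * X <= c * X) by (apply Rmult_le_compat_r; auto).
  assert (2 * c' * (y + p) ^ 2 <= b * (y + p) ^ 2) by (apply Rmult_le_compat_r; lra).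
  nra.
Qed.

Definition delta (k l : nat) : R := if Nat.eqb k l then 1 else 0.

Lemma rsum_delta m k (f : nat -> R) : (k < m)%nat ->
  rsum (fun l => delta k l * f l) m = f k.
Proof.
  intros Hk. rewrite (rsum_split _ m k Hk), (rsum_ext _ (fun _ => 0)), rsum_zero.
  - unfold delta. rewrite Nat.eqb_refl. ring.
  - intros l Hl. unfold delta. destruct (Nat.eqb_spec l k), (Nat.eqb_spec k l); try lia; ring.
Qed.

Lemma qform_last_basis m B : symm (S m) B -> qform (S m) B (delta m) = B m m.
Proof.
  intros HS. rewrite qform_last by auto.
  rewrite qform_zero by (intros k Hk; unfold delta; destruct (Nat.eqb_spec m k); [lia | auto]).
  rewrite (rsum_ext _ (fun _ => 0)), rsum_zero.
  - unfold delta. rewrite Nat.eqb_refl. ring.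
  - intros k Hk. unfold delta. destruct (Nat.eqb_spec m k); [lia | ring].
Qed.

(* Extending x by the coordinate that minimises the form in the last variable
   realises the Schur complement form. *)
Definition schur_lift (m : nat) (B : nat -> nat -> R) (x : nat -> R) (k : nat) : R :=
  if Nat.eqb k m then - rsum (fun l => B m l * x l) m / B m m else x k.

Lemma qform_schur_lift m B x : symm (S m) B -> B m m <> 0 ->
  qform (S m) B (schur_lift m B x) = qform m (schur m B) x.
Proof.
  intros HS Hb. rewrite qform_schur by auto.
  rewrite (qform_ext m (schur m B) (schur_lift m B x) x)
    by (intros k Hk; unfold schur_lift; destruct (Nat.eqb_spec k m); [lia | auto]).
  rewrite (rsum_ext (fun l => B m l * schur_lift m B x l) (fun l => B m l * x l))
    by (intros k Hk; unfold schur_lift; destruct (Nat.eqb_spec k m); [lia | auto]).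
  unfold schur_lift. rewrite Nat.eqb_refl. field. auto.
Qed.

(* A coercive Schur complement with a positive pivot gives a coercive form;
   the row of the pivot is controlled by Cauchy-Schwarz. *)
Lemma schur_coercive m B c : symm (S m) B -> 0 < B m m -> 0 < c ->
  (forall x, c * dot m x x <= qform m (schur m B) x) ->
  exists c', 0 < c' /\ forall x, c' * dot (S m) x x <= qform (S m) B x.
Proof.
  intros HS Hb Hc HQ. assert (Hb0 : B m m <> 0) by lra. set (b := B m m) in *.
  set (K := dot m (fun l => B m l) (fun l => B m l) / (b * b)).
  assert (HK : 0 <= K).
  { unfold K. apply Rmult_le_pos; [apply dot_self_nonneg |].
    apply Rlt_le, Rinv_0_lt_compat. nra. }
  destruct (coercive_step c b K Hc Hb HK) as [c' [Hc' Hstep]].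
  exists c'. split; auto. intros x.
  rewrite qform_schur by auto. fold b.
  replace (dot (S m) x x) with (dot m x x + x m * x m) by reflexivity.
  apply Hstep; [apply dot_self_nonneg | apply HQ |].
  pose proof (cauchy_schwarz m (fun l => B m l) x) as CS. unfold dot in CS at 1.
  unfold K. replace ((rsum (fun l => B m l * x l) m / b) ^ 2)
    with ((rsum (fun l => B m l * x l) m) ^ 2 / (b * b)) by (field; lra).
  replace (dot m (fun l => B m l) (fun l => B m l) / (b * b) * dot m x x)
    with (dot m (fun l => B m l) (fun l => B m l) * dot m x x / (b * b)) by (field; lra).
  apply Rmult_le_compat_r; [apply Rlt_le, Rinv_0_lt_compat; nra | exact CS].
Qed.

(* Induction on the dimension: a zero pivot
   gives an isotropic basis vector, otherwise pass to the Schur complement. *)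
Lemma psd_dichotomy m : forall B, symm m B -> (forall x, 0 <= qform m B x) ->
  (exists x, (exists k, (k < m)%nat /\ x k <> 0) /\ qform m B x = 0) \/
  (exists c, 0 < c /\ forall x, c * dot m x x <= qform m B x).
Proof.
  induction m as [|m IH]; intros B HS HP.
  { right. exists 1. split; [lra |]. intros x. unfold qform, dot. simpl. lra. }
  pose proof (HP (delta m)) as Hb0. rewrite qform_last_basis in Hb0 by auto.
  destruct (Req_dec (B m m) 0) as [Hb | Hb].
  { left. exists (delta m). split.
    - exists m. split; [lia |]. unfold delta. rewrite Nat.eqb_refl. lra.
    - rewrite qform_last_basis; auto. }
  assert (HPs : forall x, 0 <= qform m (schur m B) x)
    by (intros x; rewrite <- qform_schur_lift by auto; apply HP).
  destruct (IH (schur m B) (symm_schur m B HS) HPs)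
    as [[x [[k [Hk Hxk]] HQ]] | [c [Hc HQ]]].
  - left. exists (schur_lift m B x). split.
    + exists k. split; [lia |]. unfold schur_lift. destruct (Nat.eqb_spec k m); [lia | auto].
    + rewrite qform_schur_lift; auto.
  - right. apply (schur_coercive m B c); auto. lra.
Qed.

Lemma qform_unit_bound m A y : dot m y y = 1 ->
  qform m A y <= rsum (fun k => rsum (fun l => Rabs (A k l)) m) m.
Proof.
  intros Hy. rewrite qform_double.
  assert (Hy1 : forall k, (k < m)%nat -> Rabs (y k) <= 1).
  { intros k Hk.
    assert (y k * y k <= 1)
      by (rewrite <- Hy; apply (rsum_ge_term (fun k => y k * y k)); auto; intros; nra).
    assert (Rabs (y k) * Rabs (y k) = y k * y k)
      by (rewrite <- Rabs_mult; apply Rabs_pos_eq; nra).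
    pose proof (Rabs_pos (y k)). nra. }
  apply rsum_le. intros k Hk. apply rsum_le. intros l Hl.
  eapply Rle_trans; [apply Rle_abs |]. rewrite !Rabs_mult.
  pose proof (Hy1 k Hk). pose proof (Hy1 l Hl).
  pose proof (Rabs_pos (y k)). pose proof (Rabs_pos (y l)). pose proof (Rabs_pos (A k l)).
  assert (Rabs (y k) * Rabs (y l) <= 1) by nra.
  replace (Rabs (y k) * Rabs (A k l) * Rabs (y l))
    with (Rabs (A k l) * (Rabs (y k) * Rabs (y l))) by ring.
  nra.
Qed.

Lemma qform_le_of_unit m A mu : (forall y, dot m y y = 1 -> qform m A y <= mu) ->
  forall y, qform m A y <= mu * dot m y y.
Proof.
  intros Hunit y. pose proof (dot_self_nonneg m y) as Hn.
  destruct (Req_dec (dot m y y) 0) as [Z | NZ].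
  { rewrite qform_zero by (apply dot_self_zero; auto). rewrite Z. lra. }
  set (s := sqrt (dot m y y)).
  assert (Hs : 0 < s) by (apply sqrt_lt_R0; lra).
  assert (Hss : s * s = dot m y y) by apply sqrt_sqrt, Hn.
  pose proof (Hunit (fun k => / s * y k)) as H.
  rewrite dot_self_scal, qform_scal, <- Hss in H.
  assert (Hq : / s * / s * qform m A y <= mu) by (apply H; field; lra).
  apply (Rmult_le_compat_l (s * s)) in Hq; [| nra].
  replace (s * s * (/ s * / s * qform m A y)) with (qform m A y) in Hq by (field; lra).
  rewrite <- Hss. lra.
Qed.

Lemma rayleigh_sup m A : (1 <= m)%nat ->
  exists mu, (forall y, qform m A y <= mu * dot m y y) /\
    (forall c, 0 < c -> exists y, dot m y y = 1 /\ mu - c < qform m A y).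
Proof.
  intros Hm.
  set (E := fun r => exists y, dot m y y = 1 /\ r = qform m A y).
  assert (Hbound : bound E).
  { exists (rsum (fun k => rsum (fun l => Rabs (A k l)) m) m).
    intros r [y [Hy ->]]. apply qform_unit_bound, Hy. }
  assert (Hne : exists r, E r).
  { exists (qform m A (delta 0)). exists (delta 0). split; auto.
    unfold dot. rewrite rsum_delta by lia. unfold delta. simpl. ring. }
  destruct (completeness E Hbound Hne) as [mu [Hub Hlub]].
  exists mu. split.
  - apply qform_le_of_unit. intros y Hy. apply Hub. exists y. auto.
  - intros c Hc. apply NNPP. intros Hno.
    assert (Hup : is_upper_bound E (mu - c)).
    { intros r [y [Hy ->]].
      destruct (Rle_dec (qform m A y) (mu - c)) as [Hle | Hgt]; auto.
      exfalso. apply Hno. exists y. split; auto. lra. }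
    apply Hlub in Hup. lra.
Qed.

Definition shift (mu : R) (A : nat -> nat -> R) (k l : nat) : R := mu * delta k l - A k l.

Lemma symm_shift m mu A : symm m A -> symm m (shift mu A).
Proof.
  intros HS k l Hk Hl. unfold shift, delta. rewrite (HS k l) by auto.
  destruct (Nat.eqb_spec k l), (Nat.eqb_spec l k); try lia; ring.
Qed.

Lemma mulv_shift m mu A y k : (k < m)%nat ->
  mulv m (shift mu A) y k = mu * y k - mulv m A y k.
Proof.
  intros Hk. unfold mulv, shift.
  rewrite (rsum_ext _ (fun l => mu * (delta k l * y l) - A k l * y l)) by (intros; ring).
  rewrite rsum_minus, rsum_scal, rsum_delta by auto. reflexivity.
Qed.

Lemma qform_shift m mu A y : qform m (shift mu A) y = mu * dot m y y - qform m A y.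
Proof.
  unfold qform at 1, dot at 1.
  rewrite (rsum_ext _ (fun k => mu * (y k * y k) - y k * mulv m A y k))
    by (intros k Hk; rewrite mulv_shift by auto; ring).
  rewrite rsum_minus, rsum_scal. reflexivity.
Qed.

Lemma real_eigenvalue m A x b : (exists k, (k < m)%nat /\ x k <> 0) ->
  (forall k, (k < m)%nat -> mulv m A x k = b * x k) -> is_eigenvalue m A b 0.
Proof.
  intros [k [Hk Hx]] Hev. exists x, (fun _ => 0). split.
  - exists k. auto.
  - intros l Hl. split.
    + change (mulv m A x l = b * x l - 0 * 0). rewrite Hev by auto. ring.
    + rewrite (rsum_ext _ (fun _ => 0)) by (intros; ring). rewrite rsum_zero. ring.
Qed.

(* Perron: a symmetric nonnegative matrix has a nonnegative eigenvector, for
   the top mu of its Rayleigh quotient.  mu I - A is positive semidefinite and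
   not coercive, hence degenerate; replacing an isotropic vector x by |x| keeps
   it isotropic since A is nonnegative, and isotropic vectors are in the kernel. *)
Lemma perron_nonneg m A : (1 <= m)%nat -> symm m A ->
  (forall k l, (k < m)%nat -> (l < m)%nat -> 0 <= A k l) ->
  exists mu x, (forall k, (k < m)%nat -> 0 <= x k) /\
    (exists k, (k < m)%nat /\ x k <> 0) /\
    (forall k, (k < m)%nat -> mulv m A x k = mu * x k).
Proof.
  intros Hm HS HA.
  destruct (rayleigh_sup m A Hm) as [mu [Hray Hclose]].
  assert (HPB : forall y, 0 <= qform m (shift mu A) y)
    by (intros y; rewrite qform_shift; pose proof (Hray y); lra).
  destruct (psd_dichotomy m (shift mu A) (symm_shift m mu A HS) HPB)
    as [[x [[k0 [Hk0 Hx0]] HQ]] | [c [Hc HQ]]].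
  - set (ax := fun k => Rabs (x k)).
    assert (Hle : qform m A x <= qform m A ax).
    { rewrite !qform_double. apply rsum_le. intros k Hk. apply rsum_le. intros l Hl.
      unfold ax. pose proof (HA k l Hk Hl).
      assert (x k * x l <= Rabs (x k) * Rabs (x l)) by (rewrite <- Rabs_mult; apply Rle_abs).
      nra. }
    assert (Hn : dot m ax ax = dot m x x).
    { unfold dot, ax. apply rsum_ext. intros k Hk.
      rewrite <- Rabs_mult. apply Rabs_pos_eq. nra. }
    assert (HQa : qform m (shift mu A) ax = 0)
      by (pose proof (HPB ax); rewrite qform_shift in *; rewrite Hn in *; lra).
    exists mu, ax. split; [intros; apply Rabs_pos |]. split.
    + exists k0. split; auto. apply Rabs_no_R0. auto.
    + intros k Hk.
      pose proof (psd_isotropic_kernel m _ ax (symm_shift m mu A HS) HPB HQa k Hk) as Z.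
      rewrite mulv_shift in Z by auto. lra.
  - exfalso. destruct (Hclose c Hc) as [y [Hy Hgt]].
    pose proof (HQ y) as Hy'. rewrite qform_shift, Hy in Hy'. lra.
Qed.

Lemma perron_positive m A mu x : (2 <= m)%nat ->
  (forall k l, (k < m)%nat -> (l < m)%nat -> 0 <= A k l) ->
  (forall k l, (k < m)%nat -> (l < m)%nat -> k <> l -> 0 < A k l) ->
  (forall k, (k < m)%nat -> 0 <= x k) -> (exists k, (k < m)%nat /\ x k <> 0) ->
  (forall k, (k < m)%nat -> mulv m A x k = mu * x k) ->
  forall k, (k < m)%nat -> 0 < x k.
Proof.
  intros Hm HA HA' Hx0 [k0 [Hk0 Hxk0]] Hev.
  assert (Hxk0p : 0 < x k0) by (pose proof (Hx0 k0 Hk0); lra).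
  assert (Hother : forall k, (k < m)%nat -> k <> k0 -> 0 < mu * x k).
  { intros k Hk Hne. rewrite <- Hev by auto. unfold mulv.
    apply (rsum_pos _ m k0); auto.
    - intros l Hl. apply Rmult_le_pos; auto.
    - apply Rmult_lt_0_compat; auto. }
  set (k1 := if Nat.eqb k0 0 then 1%nat else 0%nat).
  assert (Hk1 : (k1 < m)%nat /\ k1 <> k0) by (unfold k1; destruct (Nat.eqb_spec k0 0); lia).
  assert (Hmu : 0 < mu).
  { pose proof (Hother k1 (proj1 Hk1) (proj2 Hk1)). pose proof (Hx0 k1 (proj1 Hk1)).
    destruct (Rle_dec mu 0); [nra | lra]. }
  intros k Hk. destruct (Nat.eq_dec k k0) as [-> | Hne]; auto.
  pose proof (Hother k Hk Hne). pose proof (Hx0 k Hk). nra.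
Qed.

Lemma sqrt_le_of_sq a b : 0 <= b -> a <= b * b -> sqrt a <= b.
Proof. intros Hb H. rewrite <- (sqrt_square b Hb). apply sqrt_le_1_alt. auto. Qed.

Lemma norm2_triangle p q r s :
  sqrt ((p + q) ^ 2 + (r + s) ^ 2) <= sqrt (p ^ 2 + r ^ 2) + sqrt (q ^ 2 + s ^ 2).
Proof.
  set (U := sqrt (p ^ 2 + r ^ 2)). set (V := sqrt (q ^ 2 + s ^ 2)).
  assert (HU : U * U = p ^ 2 + r ^ 2) by (apply sqrt_sqrt; nra).
  assert (HV : V * V = q ^ 2 + s ^ 2) by (apply sqrt_sqrt; nra).
  assert (0 <= U) by apply sqrt_pos. assert (0 <= V) by apply sqrt_pos.
  assert (Hc : (p * q + r * s) ^ 2 <= (U * V) ^ 2).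
  { replace ((U * V) ^ 2) with ((U * U) * (V * V)) by ring. rewrite HU, HV.
    assert (0 <= (p * s - q * r) ^ 2) by apply pow2_ge_0. nra. }
  assert (p * q + r * s <= U * V).
  { destruct (Rle_dec (p * q + r * s) 0); [nra |]. apply Rsqr_incr_0_var; unfold Rsqr; nra. }
  apply sqrt_le_of_sq; nra.
Qed.

Lemma norm2_sum_le m (c x y : nat -> R) : (forall l, (l < m)%nat -> 0 <= c l) ->
  sqrt ((rsum (fun l => c l * x l) m) ^ 2 + (rsum (fun l => c l * y l) m) ^ 2)
  <= rsum (fun l => c l * sqrt (x l ^ 2 + y l ^ 2)) m.
Proof.
  induction m as [|m IH]; intros Hc; cbn [rsum].
  - apply sqrt_le_of_sq; [lra | simpl; nra].
  - eapply Rle_trans; [apply norm2_triangle |].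
    apply Rplus_le_compat; [apply IH; intros; apply Hc; lia |].
    assert (0 <= c m) by (apply Hc; lia).
    apply sqrt_le_of_sq; [apply Rmult_le_pos; auto; apply sqrt_pos |].
    replace (c m * sqrt (x m ^ 2 + y m ^ 2) * (c m * sqrt (x m ^ 2 + y m ^ 2)))
      with (c m * c m * (sqrt (x m ^ 2 + y m ^ 2) * sqrt (x m ^ 2 + y m ^ 2))) by ring.
    rewrite sqrt_sqrt by nra. nra.
Qed.

(* The eigenvalue of a positive eigenvector of a symmetric nonnegative matrix
   dominates the modulus of every complex eigenvalue: the moduli w of an
   eigenvector for a + ib satisfy |a + ib| w <= A w, then pair with p. *)
Lemma eigenvalue_modulus_le m A mu p : symm m A ->
  (forall k l, (k < m)%nat -> (l < m)%nat -> 0 <= A k l) ->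
  (forall k, (k < m)%nat -> 0 < p k) ->
  (forall k, (k < m)%nat -> mulv m A p k = mu * p k) ->
  forall a b, is_eigenvalue m A a b -> sqrt (a ^ 2 + b ^ 2) <= mu.
Proof.
  intros HS HA Hp Hev a b [u [v [[k2 [Hk2 Hnz]] Heig]]].
  set (w := fun k => sqrt (u k ^ 2 + v k ^ 2)).
  set (lam := sqrt (a ^ 2 + b ^ 2)).
  assert (Hw : forall k, (k < m)%nat -> lam * w k <= mulv m A w k).
  { intros k Hk. destruct (Heig k Hk) as [E1 E2].
    unfold lam, w. rewrite <- sqrt_mult by nra.
    replace ((a ^ 2 + b ^ 2) * (u k ^ 2 + v k ^ 2))
      with ((a * u k - b * v k) ^ 2 + (b * u k + a * v k) ^ 2) by ring.
    rewrite <- E1, <- E2. apply norm2_sum_le. intros; apply HA; auto. }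
  assert (Hwp : 0 < dot m p w).
  { apply (rsum_pos _ m k2); auto.
    - intros l Hl. apply Rmult_le_pos; [apply Rlt_le; auto | apply sqrt_pos].
    - apply Rmult_lt_0_compat; auto. apply sqrt_lt_R0.
      destruct Hnz as [Hz | Hz]; apply Rsqr_pos_lt in Hz; unfold Rsqr in Hz; nra. }
  assert (Hchain : lam * dot m p w <= mu * dot m p w).
  { unfold dot at 1. rewrite <- rsum_scal.
    apply Rle_trans with (dot m p (mulv m A w)).
    - apply rsum_le. intros k Hk. pose proof (Hw k Hk). pose proof (Hp k Hk). nra.
    - rewrite dot_mulv_sym by auto. unfold dot. rewrite <- rsum_scal. apply Req_le.
      apply rsum_ext. intros k Hk. rewrite Hev by auto. ring. }
  apply Rmult_le_reg_r in Hchain; auto.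
Qed.

Lemma perron_spectral_radius m A : (2 <= m)%nat -> symm m A ->
  (forall k l, (k < m)%nat -> (l < m)%nat -> 0 <= A k l) ->
  (forall k l, (k < m)%nat -> (l < m)%nat -> k <> l -> 0 < A k l) ->
  exists mu p, (forall k, (k < m)%nat -> 0 < p k) /\
    (forall k, (k < m)%nat -> mulv m A p k = mu * p k) /\
    is_spectral_radius m A mu.
Proof.
  intros Hm HS HA HA'.
  destruct (perron_nonneg m A ltac:(lia) HS HA) as [mu [x [Hx0 [Hnz Hev]]]].
  pose proof (perron_positive m A mu x Hm HA HA' Hx0 Hnz Hev) as Hxp.
  exists mu, x. split; auto. split; auto. split.
  - exists mu, 0. split; [exact (real_eigenvalue m A x mu Hnz Hev) |].
    assert (Hmu : 0 <= mu).
    { destruct Hnz as [k [Hk _]]. pose proof (Hxp k Hk).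
      assert (Hnn : 0 <= mulv m A x k)
        by (apply rsum_nonneg; intros l Hl; apply Rmult_le_pos; [| apply Rlt_le]; auto).
      rewrite Hev in Hnn by auto. nra. }
    replace (mu ^ 2 + 0 ^ 2) with (mu * mu) by ring. rewrite sqrt_square; lra.
  - exact (eigenvalue_modulus_le m A mu x HS HA Hxp Hev).
Qed.

Lemma quadratic_root a N S : 0 <= N -> 0 <= S -> 0 < a + N ->
  let x := (a - N + sqrt ((a + N) ^ 2 + 4 * N * S)) / 2 in
  a <= x /\ 0 < x + N /\ (x - a) * (x + N) = N * S.
Proof.
  intros HN HS HaN x.
  set (q := (a + N) ^ 2 + 4 * N * S) in x.
  assert (Hq : 0 <= q) by (unfold q; nra).
  set (s := sqrt q) in x.
  assert (Hss : s * s = q) by (apply sqrt_sqrt; auto).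
  assert (Hs0 : 0 <= s) by apply sqrt_pos.
  assert (Hsr : a + N <= s).
  { apply Rsqr_incr_0_var; unfold Rsqr; [rewrite Hss; unfold q; nra | auto]. }
  unfold x. split; [lra |]. split; [lra |].
  replace (((a - N + s) / 2 - a) * ((a - N + s) / 2 + N)) with ((s * s - (a + N) ^ 2) / 4)
    by field.
  rewrite Hss. unfold q. field.
Qed.

Lemma dot_eigen_defect m A p mu b v : symm m A ->
  (forall k, (k < m)%nat -> mulv m A p k = mu * p k) ->
  dot m p (fun k => b * v k - mulv m A v k) = (b - mu) * dot m p v.
Proof.
  intros HS Hev. unfold dot at 1.
  rewrite (rsum_ext _ (fun k => b * (p k * v k) - p k * mulv m A v k)) by (intros; ring).
  rewrite rsum_minus, rsum_scal.
  change (rsum (fun k => p k * mulv m A v k) m) with (dot m p (mulv m A v)).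
  rewrite dot_mulv_sym by auto. unfold dot.
  rewrite (rsum_ext (fun k => v k * mulv m A p k) (fun k => mu * (p k * v k)))
    by (intros k Hk; rewrite Hev by auto; ring).
  rewrite rsum_scal. ring.
Qed.

Section WeightedBound.

Variable n : nat.
Variable A : nat -> nat -> R.
Variable P : nat -> R.
Variable N : R.

Hypothesis HA : forall k l, (k < n)%nat -> (l < n)%nat -> 0 <= A k l.
Hypothesis Hdiag : forall k, (k < n)%nat -> A k k = 0.
Hypothesis HP : forall k, (k < n)%nat -> 0 < P k.
Hypothesis HN : 0 < N.

Definition avg (k : nat) : R := mulv n A P k / P k.
Definition wratio (k l : nat) : R := A k l * P l / P k.

Hypothesis Hratio : forall k l, (k < n)%nat -> (l < n)%nat -> wratio k l <= N.
Hypothesis Hsorted : forall k l, (k <= l)%nat -> (l < n)%nat -> avg l <= avg k.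

Definition bnd (j : nat) : R :=
  (avg j - N + sqrt ((avg j + N) ^ 2 + 4 * N * rsum (fun k => avg k - avg j) j)) / 2.

Lemma avg_eigen k : (k < n)%nat -> mulv n A P k = avg k * P k.
Proof. intros Hk. unfold avg. field. pose proof (HP k Hk). lra. Qed.

Lemma avg_nonneg k : (k < n)%nat -> 0 <= avg k.
Proof.
  intros Hk. unfold avg. apply Rmult_le_pos.
  - apply rsum_nonneg. intros l Hl. apply Rmult_le_pos; [auto | apply Rlt_le; auto].
  - apply Rlt_le, Rinv_0_lt_compat. auto.
Qed.

Lemma slack_wratio k l : (k < n)%nat ->
  N * P k - A k l * P l = P k * (N - wratio k l).
Proof. intros Hk. unfold wratio. field. pose proof (HP k Hk). lra. Qed.

Lemma slack_nonneg k l : (k < n)%nat -> (l < n)%nat -> 0 <= N * P k - A k l * P l.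
Proof.
  intros Hk Hl. rewrite slack_wratio by auto.
  pose proof (HP k Hk). pose proof (Hratio k l Hk Hl). nra.
Qed.

Lemma bnd_spec j : (j < n)%nat ->
  avg j <= bnd j /\ 0 < bnd j + N /\
  (bnd j - avg j) * (bnd j + N) = N * rsum (fun k => avg k - avg j) j.
Proof.
  intros Hj. apply quadratic_root; [lra | | pose proof (avg_nonneg j Hj); lra].
  apply rsum_nonneg. intros k Hk. pose proof (Hsorted k j ltac:(lia) Hj). lra.
Qed.

Definition weight (j l : nat) : R :=
  if Nat.ltb l j then 1 + (avg l - avg j) / (bnd j + N) else 1.

Definition test (j l : nat) : R := P l * weight j l.

Definition gap (j k : nat) : R := bnd j * test j k - mulv n A (test j) k.

(* The tilts are nonnegative since the averages decrease. *)
Lemma weight_ge1 j l : (j < n)%nat -> 1 <= weight j l.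
Proof.
  intros Hj. unfold weight. destruct (Nat.ltb_spec l j); [| lra].
  destruct (bnd_spec j Hj) as [_ [Hb _]]. pose proof (Hsorted l j ltac:(lia) Hj).
  assert (0 <= (avg l - avg j) / (bnd j + N))
    by (apply Rmult_le_pos; [lra | apply Rlt_le, Rinv_0_lt_compat; lra]).
  lra.
Qed.

Definition gap_term (j k l : nat) : R :=
  if Nat.eqb l k then 0 else (N * P k - A k l * P l) * (weight j l - 1).

Definition gap_tail (j k : nat) : R := P k * (if Nat.ltb k j then 0 else avg j - avg k).

Lemma gap_term_nonneg j k l : (j < n)%nat -> (k < n)%nat -> (l < n)%nat ->
  0 <= gap_term j k l.
Proof.
  intros Hj Hk Hl. unfold gap_term. destruct (Nat.eqb l k); [lra |].
  apply Rmult_le_pos; [apply slack_nonneg; auto | pose proof (weight_ge1 j l Hj); lra].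
Qed.

Lemma gap_tail_nonneg j k : (j < n)%nat -> (k < n)%nat -> 0 <= gap_tail j k.
Proof.
  intros Hj Hk. unfold gap_tail. destruct (Nat.ltb_spec k j); [lra |].
  pose proof (Hsorted j k ltac:(lia) Hk). pose proof (HP k Hk). nra.
Qed.

(* The key identity.  It uses that the tilts sum to S / (bnd j + N), where
   N S / (bnd j + N) = bnd j - avg j by the choice of bnd j. *)
Lemma gap_formula j k : (j < n)%nat -> (k < n)%nat ->
  gap j k = rsum (gap_term j k) n + gap_tail j k.
Proof.
  intros Hj Hk. destruct (bnd_spec j Hj) as [_ [Hb Hq]].
  set (b := bnd j) in *. set (S := rsum (fun l => avg l - avg j) j) in *.
  assert (Hsum : rsum (fun l => weight j l - 1) n = S / (b + N)).
  { rewrite (rsum_ext _ (fun l => if Nat.ltb l j then (avg l - avg j) / (b + N) else 0)).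
    - rewrite rsum_trunc by lia. unfold S, Rdiv. rewrite Rmult_comm, <- rsum_scal.
      apply rsum_ext. intros; ring.
    - intros l Hl. unfold weight. fold b. destruct (Nat.ltb l j); ring. }
  assert (HNS : N * (S / (b + N)) = b - avg j).
  { apply (Rmult_eq_reg_r (b + N)); [| lra]. rewrite Hq. field. lra. }
  assert (Hmul : mulv n A (test j) k =
     avg k * P k + rsum (fun l => A k l * P l * (weight j l - 1)) n).
  { rewrite <- avg_eigen by auto. unfold mulv, test. rewrite <- rsum_plus.
    apply rsum_ext. intros; ring. }
  assert (Hoff : rsum (gap_term j k) n =
     N * P k * (S / (b + N)) - rsum (fun l => A k l * P l * (weight j l - 1)) n
     - N * P k * (weight j k - 1)).
  { rewrite <- Hsum, <- rsum_scal, <- rsum_minus.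
    rewrite (rsum_split (fun l => N * P k * (weight j l - 1) - A k l * P l * (weight j l - 1))
               n k Hk), Hdiag by auto.
    rewrite (rsum_ext (gap_term j k)
               (fun l => if Nat.eqb l k then 0 else
                  N * P k * (weight j l - 1) - A k l * P l * (weight j l - 1)))
      by (intros l Hl; unfold gap_term; destruct (Nat.eqb l k); ring).
    ring. }
  unfold gap. rewrite Hmul, Hoff. unfold test, gap_tail.
  replace (N * P k * (S / (b + N))) with (P k * (N * (S / (b + N)))) by ring.
  rewrite HNS. fold b. unfold weight. fold b. destruct (Nat.ltb_spec k j).
  - field. lra.
  - ring.
Qed.

Lemma gap_nonneg j k : (j < n)%nat -> (k < n)%nat -> 0 <= gap j k.
Proof.
  intros Hj Hk. rewrite gap_formula by auto. apply Rplus_le_le_0_compat.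
  - apply rsum_nonneg. intros l Hl. apply gap_term_nonneg; auto.
  - apply gap_tail_nonneg; auto.
Qed.

Lemma gap_zero_inv j : (j < n)%nat -> (forall k, (k < n)%nat -> gap j k = 0) ->
  (forall k l, (k < n)%nat -> (l < j)%nat -> k <> l -> avg l <> avg j -> wratio k l = N) /\
  (forall k, (j <= k)%nat -> (k < n)%nat -> avg k = avg j).
Proof.
  intros Hj Hz.
  assert (Hparts : forall k, (k < n)%nat -> rsum (gap_term j k) n = 0 /\ gap_tail j k = 0).
  { intros k Hk. pose proof (gap_formula j k Hj Hk) as F. rewrite Hz in F by auto.
    assert (0 <= rsum (gap_term j k) n)
      by (apply rsum_nonneg; intros l Hl; apply gap_term_nonneg; auto).
    pose proof (gap_tail_nonneg j k Hj Hk). lra. }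
  destruct (bnd_spec j Hj) as [_ [Hb _]].
  split.
  - intros k l Hk Hl Hkl Havg. destruct (Hparts k Hk) as [Hsum _].
    pose proof (rsum_eq0 _ n (fun l Hl => gap_term_nonneg j k l Hj Hk Hl) Hsum l ltac:(lia))
      as Hterm.
    unfold gap_term, weight in Hterm.
    destruct (Nat.eqb_spec l k), (Nat.ltb_spec l j); try lia.
    rewrite slack_wratio in Hterm by auto. pose proof (HP k Hk).
    assert ((avg l - avg j) / (bnd j + N) <> 0)
      by (apply Rmult_integral_contrapositive; split; [lra | apply Rinv_neq_0_compat; lra]).
    apply Rmult_integral in Hterm. destruct Hterm as [Z | Z]; [| lra].
    apply Rmult_integral in Z. destruct Z; lra.
  - intros k Hjk Hk. destruct (Hparts k Hk) as [_ Htail]. unfold gap_tail in Htail.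
    destruct (Nat.ltb_spec k j); [lia |]. pose proof (HP k Hk).
    apply Rmult_integral in Htail. destruct Htail; lra.
Qed.

Lemma gap_zero_of j : (j < n)%nat ->
  (forall k l, (k < n)%nat -> (l < j)%nat -> k <> l -> wratio k l = N) ->
  (forall k, (j <= k)%nat -> (k < n)%nat -> avg k = avg j) ->
  forall k, (k < n)%nat -> gap j k = 0.
Proof.
  intros Hj Hr Hflat k Hk. rewrite gap_formula by auto.
  rewrite (rsum_ext _ (fun _ => 0)), rsum_zero.
  - unfold gap_tail. destruct (Nat.ltb_spec k j); [ring |]. rewrite (Hflat k) by auto. ring.
  - intros l Hl. unfold gap_term. destruct (Nat.eqb_spec l k); [reflexivity |].
    unfold weight. destruct (Nat.ltb_spec l j); [| ring].
    rewrite slack_wratio, Hr by auto. ring.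
Qed.

Lemma bnd_flat t i : (t <= i)%nat -> (i < n)%nat ->
  (forall k, (t <= k)%nat -> (k < n)%nat -> avg k = avg t) -> bnd i = bnd t.
Proof.
  intros Hti Hi Hflat. unfold bnd. rewrite <- (Hflat i) by auto.
  rewrite (rsum_tail_zero (fun k => avg k - avg i) t i Hti); [reflexivity |].
  intros k Htk Hk. rewrite (Hflat k), (Hflat i) by lia. ring.
Qed.

Definition equality_case (i : nat) : Prop :=
  (forall k, (k < n)%nat -> avg k = avg 0%nat) \/
  (exists t, (1 <= t)%nat /\ (t <= i)%nat /\
     (forall k l, (k < n)%nat -> (l < t)%nat -> k <> l -> wratio k l = N) /\
     (forall k, (t <= k)%nat -> (k < n)%nat -> avg k = avg t)).

(* With t the first index where the averages reach avg i, a vanishing gap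
   yields the equality case. *)
Lemma equality_case_of_gap_zero i : (i < n)%nat ->
  (forall k, (k < n)%nat -> gap i k = 0) -> equality_case i.
Proof.
  intros Hi Hz. destruct (gap_zero_inv i Hi Hz) as [Hr Htail].
  destruct (epsilon_smallest (fun t => avg t = avg i) (fun t => Req_dec_T (avg t) (avg i))
              (ex_intro _ i eq_refl)) as [t [Ht Hmin]].
  assert (Hti : (t <= i)%nat) by (apply Hmin; reflexivity).
  assert (Hflat : forall k, (t <= k)%nat -> (k < n)%nat -> avg k = avg t).
  { intros k Htk Hk. rewrite Ht. destruct (Nat.le_gt_cases k i).
    - pose proof (Hsorted k i ltac:(lia) Hi). pose proof (Hsorted t k Htk Hk). lra.
    - apply Htail; lia. }
  destruct t as [|t].
  - left. intros k Hk. apply Hflat; lia.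
  - right. exists (S t). repeat split; auto; [lia |].
    intros k l Hk Hl Hkl. apply Hr; auto; [lia |].
    intros E. pose proof (Hmin l E). lia.
Qed.

Lemma gap_zero_of_equality_case i : (i < n)%nat -> equality_case i ->
  exists t, (t <= i)%nat /\ bnd i = bnd t /\ forall k, (k < n)%nat -> gap t k = 0.
Proof.
  intros Hi [Hall | [t [_ [Hti [Hr Hflat]]]]].
  - exists 0%nat. split; [lia |]. split.
    + apply bnd_flat; [lia | auto |]. intros k _ Hk. apply Hall; auto.
    + apply gap_zero_of; [lia | intros; lia |]. intros k _ Hk. apply Hall; auto.
  - exists t. split; [auto |]. split.
    + apply bnd_flat; auto.
    + apply gap_zero_of; auto; lia.
Qed.

Hypothesis HS : symm n A.

Section PerronVector.

Variable mu : R.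
Variable p : nat -> R.
Hypothesis Hp : forall k, (k < n)%nat -> 0 < p k.
Hypothesis Hev : forall k, (k < n)%nat -> mulv n A p k = mu * p k.

Lemma gap_pairing j : (j < n)%nat ->
  dot n p (gap j) = (bnd j - mu) * dot n p (test j) /\ 0 < dot n p (test j).
Proof.
  intros Hj. split; [apply dot_eigen_defect; auto |].
  assert (Hpos : forall k, (k < n)%nat -> 0 < p k * test j k).
  { intros k Hk. unfold test. pose proof (Hp k Hk). pose proof (HP k Hk).
    pose proof (weight_ge1 j k Hj). apply Rmult_lt_0_compat; nra. }
  apply (rsum_pos _ n j); auto. intros k Hk. apply Rlt_le, Hpos, Hk.
Qed.

(* The bound, and its equality case, for the eigenvalue of a positive
   eigenvector: equality forces all gaps to vanish, and conversely a positive
   eigenvector test t for bnd i pairs with p to give bnd i = mu. *)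
Lemma perron_le_bnd i : (i < n)%nat ->
  mu <= bnd i /\ (mu = bnd i <-> equality_case i).
Proof.
  intros Hi. destruct (gap_pairing i Hi) as [Hpair Htest].
  assert (Hgap : 0 <= dot n p (gap i)).
  { apply rsum_nonneg. intros k Hk. pose proof (Hp k Hk). pose proof (gap_nonneg i k Hi Hk). nra. }
  split; [nra |]. split.
  - intros Heq. apply equality_case_of_gap_zero; auto. intros k Hk.
    rewrite <- Heq, Rminus_diag, Rmult_0_l in Hpair.
    pose proof (rsum_eq0 _ n (fun k Hk => Rmult_le_pos _ _ (Rlt_le _ _ (Hp k Hk))
                                            (gap_nonneg i k Hi Hk)) Hpair k Hk) as Z.
    pose proof (Hp k Hk). simpl in Z. apply Rmult_integral in Z. destruct Z; lra.
  - intros Hcase. destruct (gap_zero_of_equality_case i Hi Hcase) as [t [Hti [Hbt Hz]]].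
    destruct (gap_pairing t ltac:(lia)) as [Hpair' Htest'].
    unfold dot at 1 in Hpair'. rewrite (rsum_ext _ (fun _ => 0)), rsum_zero in Hpair'
      by (intros k Hk; rewrite Hz by auto; ring).
    rewrite Hbt. symmetry in Hpair'. apply Rmult_integral in Hpair'. destruct Hpair'; lra.
Qed.

End PerronVector.
End WeightedBound.

Lemma walk_snoc n adj i m k j : walk n adj i m k -> adj m j = true -> (j < n)%nat ->
  walk n adj i j (S k).
Proof.
  induction 1; intros Ha Hj.
  - apply walk_cons with j; auto. apply walk_nil; auto.
  - apply walk_cons with m; auto.
Qed.

Lemma walk_rev n adj i j k : simple_graph n adj -> walk n adj i j k -> walk n adj j i k.
Proof.
  intros [Hsym _]. induction 1.
  - apply walk_nil; auto.
  - apply walk_snoc with m; auto. rewrite Hsym; auto.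
Qed.

Lemma ratio_le_Nmax n d alpha k l : (k < n)%nat -> (l < n)%nat ->
  ratio n d alpha k l <= Nmax n d alpha.
Proof.
  intros Hk Hl. unfold Nmax.
  eapply Rle_trans; [apply (rmax_ge (fun j => ratio n d alpha k j) n l Hl) |].
  apply (rmax_ge (fun i => rmax (fun j => ratio n d alpha i j) n) n k Hk).
Qed.

Section DistanceMatrix.

Variables (n : nat) (adj : nat -> nat -> bool) (d : nat -> nat -> nat).
Hypothesis Hsimple : simple_graph n adj.
Hypothesis Hd : is_distance_matrix n adj d.

Lemma dist_symm : symm n (dist_matrix_R d).
Proof.
  intros k l Hk Hl. unfold dist_matrix_R. f_equal.
  destruct (Hd k l Hk Hl) as [W1 H1]. destruct (Hd l k Hl Hk) as [W2 H2].
  pose proof (H1 _ (walk_rev _ _ _ _ _ Hsimple W2)).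
  pose proof (H2 _ (walk_rev _ _ _ _ _ Hsimple W1)). lia.
Qed.

Lemma dist_diag k : (k < n)%nat -> dist_matrix_R d k k = 0.
Proof.
  intros Hk. unfold dist_matrix_R. destruct (Hd k k Hk Hk) as [_ H].
  specialize (H 0%nat (walk_nil n adj k Hk)). replace (d k k) with 0%nat by lia. reflexivity.
Qed.

Lemma dist_offdiag_pos k l : (k < n)%nat -> (l < n)%nat -> k <> l -> 0 < dist_matrix_R d k l.
Proof.
  intros Hk Hl Hne. unfold dist_matrix_R. apply lt_0_INR.
  destruct (Hd k l Hk Hl) as [W _].
  destruct (d k l) eqn:E; [| lia]. inversion W; subst. lia.
Qed.


(* N > 0: the weighted distance between vertices 0 and 1 is positive. *)
Lemma Nmax_pos alpha : (2 <= n)%nat -> 0 < Nmax n d alpha.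
Proof.
  intros Hn. eapply Rlt_le_trans; [| apply (ratio_le_Nmax n d alpha 0 1); lia].
  unfold ratio, Rdiv, Rpower. apply Rmult_lt_0_compat; [| apply Rinv_0_lt_compat, exp_pos].
  apply Rmult_lt_0_compat; [| apply exp_pos].
  apply (dist_offdiag_pos 0 1); lia.
Qed.

End DistanceMatrix.

(* Theorem 5, with 0-based indices (t here is the paper's t - 1).  The Perron
   vector of the distance matrix and the weighted bound with P k = D_k^alpha
   give the result, since M, ratio and bound are by definition avg, wratio and
   bnd for these data; connectivity is already encoded in the distance matrix. *)
Theorem theorem5 (n : nat) (adj : nat -> nat -> bool) (d : nat -> nat -> nat)
  (alpha : R)
  (Hn : (2 <= n)%nat)
  (Hsimple : simple_graph n adj)
  (Hconn : connected n adj)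
  (Hd : is_distance_matrix n adj d)
  (Hsorted : forall k l, (k <= l)%nat -> (l < n)%nat ->
     gen_avg_trans n d alpha l <= gen_avg_trans n d alpha k)
  (i : nat) (Hi : (i < n)%nat) :
  let M := gen_avg_trans n d alpha in
  let N := Nmax n d alpha in
  let bound := (M i - N + sqrt ((M i + N) ^ 2
                  + 4 * N * rsum (fun k => M k - M i) i)) / 2 in
  exists rho, is_spectral_radius n (dist_matrix_R d) rho /\
    rho <= bound /\
    (rho = bound <->
      ((forall k, (k < n)%nat -> M k = M 0%nat) \/
       (exists t, (1 <= t)%nat /\ (t <= i)%nat /\
          (forall k l, (k < n)%nat -> (l < t)%nat -> k <> l ->
             ratio n d alpha k l = N) /\
          (forall k, (t <= k)%nat -> (k < n)%nat -> M k = M t)))).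
Proof.
  intros M N bound.
  set (A := dist_matrix_R d).
  set (P := fun k => Rpower (transmission n d k) alpha).
  assert (HA : forall k l, (k < n)%nat -> (l < n)%nat -> 0 <= A k l)
    by (intros; apply pos_INR).
  assert (HP : forall k, (k < n)%nat -> 0 < P k) by (intros; apply exp_pos).
  destruct (perron_spectral_radius n A Hn (dist_symm n adj d Hsimple Hd) HA
              (dist_offdiag_pos n adj d Hd)) as [mu [p [Hp [Hev Hrad]]]].
  exists mu. split; [exact Hrad |].
  exact (perron_le_bnd n A P N HA (dist_diag n adj d Hd) HP (Nmax_pos n adj d Hd alpha Hn)
           (ratio_le_Nmax n d alpha) Hsorted (dist_symm n adj d Hsimple Hd) mu p Hp Hev i Hi).
Qed.
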